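(* Let $H$ be a locally compact abelian group, $X$ a compact metric space and $\sigma=(\sigma_1,\dots,\sigma_k)$ a $k$-tuple of pairwise commuting surjective local homeomorphisms of $X$. Give $A=C(X,H)$ the $\mathbb{N}^k$-module structure $(n f)(x)=f(\sigma^n(x))$. Then the map $\Phi:Z^1(\mathbb{N}^k,A)\to Z^1_{\mathrm{cont}}(\mathcal{G}(X,\sigma),H)$ sending a semigroup cocycle $c$ to the unique continuous groupoid $1$-cocycle $\Phi(c)$ with $\Phi(c)(x,\mathbf{e}_i,\sigma_i(x))=c(\mathbf{e}_i)(x)$ for all $i$ and $x$ (explicitly $\Phi(c)(x,m-n,y)=c(m)(x)-c(n)(y)$ whenever $\sigma^m(x)=\sigma^n(y)$) is a well-defined group isomorphism, it restricts to an isomorphism $B^1(\mathbb{N}^k,A)\cong B^1_{\mathrm{cont}}(\mathcal{G}(X,\sigma),H)$, and hence induces an isomorphism $H^1(\mathbb{N}^k,C(X,H))\cong H^1_{\mathrm{cont}}(\mathcal{G}(X,\sigma),H)$.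
   Context: For $n\in\mathbb{N}^k$, $\sigma^n=\sigma_1^{n_1}\circ\cdots\circ\sigma_k^{n_k}$. Semigroup cohomology: $Z^1(\mathbb{N}^k,A)=\{\gamma:\mathbb{N}^k\to A\mid \gamma(m+n)=\gamma(m)+m\gamma(n)\}$, $B^1(\mathbb{N}^k,A)=\{n\mapsto \alpha-n\alpha : \alpha\in A\}$, $H^1=Z^1/B^1$. The groupoid $\mathcal{G}(X,\sigma)=\{(x,p-q,y): p,q\in\mathbb{N}^k,\ \sigma^p(x)=\sigma^q(y)\}$ with $(x,m,y)(y,n,z)=(x,m+n,z)$, $r(x,n,y)=x$, $s(x,n,y)=y$, and topology with basis $U\times\{p-q\}\times V$ ($U,V$ open, $\sigma^p(U)=\sigma^q(V)$). $Z^1_{\mathrm{cont}}(\mathcal{G},H)$ is the group of continuous homomorphisms $\mathcal{G}\to H$; $B^1_{\mathrm{cont}}(\mathcal{G},H)$ consists of those of the form $\gamma\mapsto f(r(\gamma))-f(s(\gamma))$ with $f\in C(X,H)$; $H^1_{\mathrm{cont}}=Z^1_{\mathrm{cont}}/B^1_{\mathrm{cont}}$. *)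

From HB Require Import structures.
From mathcomp Require Import all_boot all_order all_algebra.
From mathcomp Require Import all_classical all_reals all_analysis.

Set Implicit Arguments.
Unset Strict Implicit.
Unset Printing Implicit Defensive.
Import Order.TTheory GRing.Theory Num.Theory.

Local Open Scope classical_set_scope.
Local Open Scope ring_scope.

(* Semigroup cochains N^k -> A, where A = C(X,H) (continuity imposed in Z1) *)
Definition cochain (X : Type) (H : Type) (k : nat) := ('I_k -> nat) -> X -> H.

Section Defs.
Context {X : Type} {H : zmodType} {k : nat} (s : 'I_k -> X -> X).

Definition spow (n : 'I_k -> nat) : X -> X :=
  foldr (fun i f => iter (n i) (s i) \o f) id (enum 'I_k).

Definition addv (m n : 'I_k -> nat) : 'I_k -> nat := fun i => (m i + n i)%N.
Definition unitv (i : 'I_k) : 'I_k -> nat := fun j => nat_of_bool (j == i).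
Definition zerov : 'I_k -> nat := fun _ => 0%N.
Definition diffv (p q : 'I_k -> nat) : 'I_k -> int := fun i => (p i)%:Z - (q i)%:Z.
Definition addz (m n : 'I_k -> int) : 'I_k -> int := fun i => m i + n i.

Definition inG (g : X * ('I_k -> int) * X) : Prop :=
  exists p q : 'I_k -> nat, g.1.2 = diffv p q /\ spow p g.1.1 = spow q g.2.

Definition Gpd := {g : X * ('I_k -> int) * X | inG g}.

Definition gr (g : Gpd) : X := (sval g).1.1.
Definition gdeg (g : Gpd) : 'I_k -> int := (sval g).1.2.
Definition gs (g : Gpd) : X := (sval g).2.


Definition cocycle_eq (c : cochain X H k) : Prop :=
  forall m n x, c (addv m n) x = c m x + c n (spow m x).

Definition gpd_hom (phi : Gpd -> H) : Prop :=
  forall g h gh : Gpd, gs g = gr h ->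
    sval gh = (gr g, addz (gdeg g) (gdeg h), gs h) ->
    phi gh = phi g + phi h.
End Defs.

Section TopDefs.
Context {X : topologicalType} {H : topologicalType} {k : nat} (s : 'I_k -> X -> X).

Definition local_homeo (f : X -> X) : Prop :=
  continuous f /\
  forall x, exists U : set X, [/\ open U, U x,
    (forall a b, U a -> U b -> f a = f b -> a = b) &
    (forall V : set X, open V -> V `<=` U -> open (f @` V))].

Definition Zbasic (U V : set X) (p q : 'I_k -> nat) : set (X * ('I_k -> int) * X) :=
  [set t | [/\ U t.1.1, V t.2, t.1.2 = diffv p q & spow s p t.1.1 = spow s q t.2]].

Definition basic_open (W : set (X * ('I_k -> int) * X)) : Prop :=
  exists (U V : set X) (p q : 'I_k -> nat),
    [/\ open U, open V, spow s p @` U = spow s q @` V & W = Zbasic U V p q].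

Definition gpd_continuous (phi : Gpd s -> H) : Prop :=
  forall (g : Gpd s) (W : set H), open W -> W (phi g) ->
    exists B, [/\ basic_open B, B (sval g) &
      forall h : Gpd s, B (sval h) -> W (phi h)].
End TopDefs.

Section Cohom.
Context {X : topologicalType} {H : topologicalZmodType} {k : nat} (s : 'I_k -> X -> X).

Definition Z1 : set (cochain X H k) :=
  [set c | (forall n, continuous (c n)) /\ cocycle_eq s c].

Definition B1 : set (cochain X H k) :=
  [set c | exists alpha : X -> H, continuous alpha /\
     forall n x, c n x = alpha x - alpha (spow s n x)].

Definition Z1cont : set (Gpd s -> H) :=
  [set phi | gpd_hom phi /\ gpd_continuous phi].

Definition B1cont : set (Gpd s -> H) :=
  [set phi | exists f : X -> H, continuous f /\
     forall g, phi g = f (gr g) - f (gs g)].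

Definition on_generators (phi : Gpd s -> H) (c : cochain X H k) : Prop :=
  forall (g : Gpd s) (i : 'I_k) (x : X),
    sval g = (x, diffv (unitv i) zerov, s i x) -> phi g = c (unitv i) x.

Definition explicit_formula (phi : Gpd s -> H) (c : cochain X H k) : Prop :=
  forall (g : Gpd s) (m n : 'I_k -> nat),
    gdeg g = diffv m n -> spow s m (gr g) = spow s n (gs g) ->
    phi g = c m (gr g) - c n (gs g).
End Cohom.

Definition addc {X : Type} {H : zmodType} {k : nat} (c c' : cochain X H k) : cochain X H k :=
  fun n x => c n x + c' n x.
Definition subc {X : Type} {H : zmodType} {k : nat} (c c' : cochain X H k) : cochain X H k :=
  fun n x => c n x - c' n x.

From HB Require Import structures.
From mathcomp Require Import all_boot all_order all_algebra.
From mathcomp Require Import all_classical all_reals all_analysis.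
From mathcomp Require Import zify.
(* imported last: its addv and diffv (on N^k) shadow the vector-space ones *)
Import GRing.Theory.
Local Open Scope classical_set_scope.

Set Implicit Arguments.
Unset Strict Implicit.

(* Every arrow of G(X,sigma) has the form (x, p - q, y) with
   sigma^p x = sigma^q y, and Phi(c) sends it to c(p)(x) - c(q)(y).
   The theorem then collects these facts. *)

Section VectorArithmetic.
Variable k : nat.
Implicit Types p q m n r : 'I_k -> nat.

Lemma add0v p : addv zerov p = p.
Proof. by apply/funext. Qed.

Lemma addvC p q : addv p q = addv q p.
Proof. by apply/funext => i; rewrite /addv addnC. Qed.

Lemma diffv_cross p q m n : diffv p q = diffv m n -> addv p n = addv m q.
Proof.
move=> E; apply/funext => i; have := congr1 (fun f => f i) E.
rewrite /diffv /addv /=; lia.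
Qed.

Lemma diffv_shift p q r : diffv (addv p r) (addv q r) = diffv p q.
Proof. by apply/funext => i; rewrite /diffv /addv; lia. Qed.

Lemma addz_diffv p q m n : addz (diffv p q) (diffv m n) = diffv (addv p m) (addv q n).
Proof. by apply/funext => i; rewrite /addz /diffv /addv; lia. Qed.

(* total length |p| of p in N^k, used for induction on words in the e_i *)
Definition lengthv p : nat := \sum_(i < k) p i.

Lemma lengthv0 p : lengthv p = 0 -> p = zerov.
Proof.
move=> /eqP; rewrite /lengthv sum_nat_eq0 => /forallP p0.
by apply/funext => i; apply/eqP; exact: (implyP (p0 i)).
Qed.

Lemma lengthv_pred p : lengthv p <> 0 ->
  exists i p', p = addv (unitv i) p' /\ lengthv p = (lengthv p').+1.
Proof.
move=> /eqP; rewrite /lengthv sum_nat_eq0 => /forallPn[i] /=; rewrite -lt0n => pi.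
exists i, (fun j => p j - unitv i j).
have Ep : p = addv (unitv i) (fun j => p j - unitv i j).
  by apply/funext => j; rewrite /addv /unitv; case: eqP => [->|_] /=; lia.
split=> //; rewrite {1}Ep /lengthv /addv big_split /= (bigD1 i) //= big1.
  by rewrite /unitv eqxx.
by move=> j /negbTE ji; rewrite /unitv ji.
Qed.

End VectorArithmetic.

Definition spow_along (X : Type) (k : nat) (s : 'I_k -> X -> X)
    (l : seq 'I_k) (n : 'I_k -> nat) : X -> X :=
  foldr (fun i f => iter (n i) (s i) \o f) id l.

Lemma iter_commute (X : Type) (f g : X -> X) (n : nat) :
  (forall x, f (g x) = g (f x)) -> forall x, iter n f (g x) = g (iter n f x).
Proof. by move=> fg; elim: n => [|n IH] x //=; rewrite IH fg. Qed.

Section IteratedMaps.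
Variables (X : Type) (k : nat) (s : 'I_k -> X -> X).
Hypothesis s_comm : forall i j, s i \o s j = s j \o s i.

Lemma s_commute i j x : s i (s j x) = s j (s i x).
Proof. exact: (congr1 (fun f => f x) (s_comm i j)). Qed.

Lemma spow_along_commute l n (h : X -> X) : (forall i x, s i (h x) = h (s i x)) ->
  forall x, spow_along s l n (h x) = h (spow_along s l n x).
Proof. by move=> sh; elim: l => [|i l IH] x //=; rewrite IH iter_commute. Qed.

Lemma spow_along_add l m n x :
  spow_along s l (addv m n) x = spow_along s l m (spow_along s l n x).
Proof.
elim: l x => [|i l IH] x //=.
rewrite IH [iter (addv m n i) _ _]iterD; congr (iter _ _ _).
rewrite (@spow_along_commute l m (iter (n i) (s i))) // => j y.
by rewrite iter_commute // => z; exact: s_commute.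
Qed.

Lemma spow_add m n x : spow s (addv m n) x = spow s m (spow s n x).
Proof. exact: spow_along_add. Qed.

Lemma spow0 x : spow s zerov x = x.
Proof. by rewrite /spow; elim: (enum 'I_k) => //= i l ->. Qed.

Lemma spow_unitv i x : spow s (unitv i) x = s i x.
Proof.
rewrite -[spow s _ x]/(spow_along s (enum 'I_k) (unitv i) x).
have -> : spow_along s (enum 'I_k) (unitv i) x =
          iter (count (pred1 i) (enum 'I_k)) (s i) x.
  by elim: (enum 'I_k) x => [|j l IH] x //=; rewrite IH /unitv; case: eqP => [->|].
by rewrite (count_uniq_mem _ (enum_uniq _)) mem_enum.
Qed.

Lemma spow_commute m n x : spow s m (spow s n x) = spow s n (spow s m x).
Proof. by rewrite -!spow_add addvC. Qed.

Lemma spow_shift p q r x y : spow s p x = spow s q y ->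
  spow s (addv p r) x = spow s (addv q r) y.
Proof. by move=> E; rewrite !spow_add (spow_commute p r) (spow_commute q r) E. Qed.

End IteratedMaps.

Section Cocycles.
Variables (X : Type) (H : zmodType) (k : nat) (s : 'I_k -> X -> X).
Local Open Scope ring_scope.
Implicit Types (c : cochain X H k) (p q m n r : 'I_k -> nat).

Lemma cocycle0 c : cocycle_eq s c -> forall x, c zerov x = 0.
Proof.
move=> cc x; have := cc zerov zerov x; rewrite add0v spow0 => E.
by apply/esym/(addrI (c zerov x)); rewrite addr0 {1}E.
Qed.

Lemma subc_cocycle c c' : cocycle_eq s c -> cocycle_eq s c' -> cocycle_eq s (subc c c').
Proof. by move=> cc cc' m n x; rewrite /subc cc cc' opprD addrACA. Qed.

Lemma cocycle_diff_shift c p q r x y : cocycle_eq s c ->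
  spow s p x = spow s q y -> c (addv p r) x - c (addv q r) y = c p x - c q y.
Proof. by move=> cc E; rewrite !cc E opprD addrACA subrr addr0. Qed.

(* Hence it only depends on the difference p - q: Phi(c) is well defined. *)
Lemma cocycle_diff_welldef c p q m n x y : cocycle_eq s c ->
  spow s p x = spow s q y -> spow s m x = spow s n y -> diffv p q = diffv m n ->
  c p x - c q y = c m x - c n y.
Proof.
move=> cc Epq Emn D.
rewrite -(cocycle_diff_shift n cc Epq) -(cocycle_diff_shift q cc Emn).
by rewrite (diffv_cross D) (addvC n q).
Qed.

Lemma cocycle_eq_on_generators c c' : cocycle_eq s c -> cocycle_eq s c' ->
  (forall i x, c (unitv i) x = c' (unitv i) x) -> forall p x, c p x = c' p x.
Proof.
move=> cc cc' cu p; move Ep: (lengthv p) => len.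
elim: len p Ep => [|len IH] p Ep x.
  by rewrite (lengthv0 Ep) !cocycle0.
have [|i [p' [Edec Ep']]] := lengthv_pred (p:=p); first by rewrite Ep.
by rewrite Edec cc cc' cu IH //; apply/eq_add_S; rewrite -Ep' Ep.
Qed.

End Cocycles.

Section GroupoidCocycles.
Variables (X : Type) (H : zmodType) (k : nat) (s : 'I_k -> X -> X).
Hypothesis s_comm : forall i j, s i \o s j = s j \o s i.
Local Open Scope ring_scope.
Implicit Types (c : cochain X H k) (phi : Gpd s -> H) (p q m n : 'I_k -> nat).

Lemma arrow_presentation (g : Gpd s) : exists pq : ('I_k -> nat) * ('I_k -> nat),
  gdeg g = diffv pq.1 pq.2 /\ spow s pq.1 (gr g) = spow s pq.2 (gs g).
Proof. by case: g => [[[x d] y] [p [q [D E]]]]; exists (p, q). Qed.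

Definition presentation (g : Gpd s) : ('I_k -> nat) * ('I_k -> nat) :=
  sval (cid (arrow_presentation g)).

Lemma presentationP g : gdeg g = diffv (presentation g).1 (presentation g).2 /\
  spow s (presentation g).1 (gr g) = spow s (presentation g).2 (gs g).
Proof. exact: svalP (cid (arrow_presentation g)). Qed.

Definition Phi c (g : Gpd s) : H :=
  c (presentation g).1 (gr g) - c (presentation g).2 (gs g).

(* By well-definedness, every presentation of an arrow computes Phi(c). *)
Lemma Phi_formula c : cocycle_eq s c -> forall g m n,
  gdeg g = diffv m n -> spow s m (gr g) = spow s n (gs g) ->
  Phi c g = c m (gr g) - c n (gs g).
Proof.
move=> cc g m n D E; have [D' E'] := presentationP g.
by apply: cocycle_diff_welldef => //; rewrite -D' -D.
Qed.

Lemma Phi_add c c' g : Phi (addc c c') g = Phi c g + Phi c' g.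
Proof. by rewrite /Phi /addc opprD addrACA. Qed.

Lemma Phi_sub c c' g : Phi (subc c c') g = Phi c g - Phi c' g.
Proof. by rewrite /Phi /subc !opprB addrACA [RHS]addrACA (addrC (- _)). Qed.

(* Phi(c) is a groupoid homomorphism: present g and h with a common middle
   exponent, then the middle terms cancel. *)
Lemma Phi_hom c : cocycle_eq s c -> gpd_hom (Phi c).
Proof.
move=> cc g h gh E Egh.
have [[p q] /= [Dg Eg]] := arrow_presentation g.
have [[p' q'] /= [Dh Eh]] := arrow_presentation h.
have Eg' := spow_shift s_comm p' Eg; have Eh' := spow_shift s_comm q Eh.
have [grgh gsgh] : gr gh = gr g /\ gs gh = gs h by rewrite /gr /gs Egh.
rewrite (Phi_formula cc (g:=g) (m:=addv p p') (n:=addv q p')) ?Dg ?diffv_shift //.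
rewrite (Phi_formula cc (g:=h) (m:=addv p' q) (n:=addv q' q)) ?Dh ?diffv_shift //.
rewrite (Phi_formula cc (g:=gh) (m:=addv p p') (n:=addv q' q)).
- by rewrite grgh gsgh E (addvC q p') addrA subrK.
- by rewrite /gdeg Egh /= -/(gdeg g) -/(gdeg h) Dg Dh addz_diffv (addvC q).
- by rewrite grgh gsgh Eg' E (addvC q p') Eh'.
Qed.

Definition arrow_of (x : X) p : Gpd s :=
  exist _ (x, diffv p zerov, spow s p x)
    (ex_intro _ p (ex_intro _ zerov (conj erefl (esym (spow0 s _))))).

Lemma Phi_arrow_of c x p : cocycle_eq s c -> Phi c (arrow_of x p) = c p x.
Proof.
move=> cc; rewrite (Phi_formula cc (g:=arrow_of x p) (m:=p) (n:=zerov)) //=.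
  by rewrite (cocycle0 cc) subr0.
by rewrite spow0.
Qed.

Definition cochain_of phi : cochain X H k := fun p x => phi (arrow_of x p).

Lemma cochain_of_cocycle phi : gpd_hom phi -> cocycle_eq s (cochain_of phi).
Proof.
move=> hom m n x; apply: (hom (arrow_of x m) (arrow_of (spow s m x) n)) => //=.
by rewrite addz_diffv add0v spow_add // spow_commute.
Qed.

(* A homomorphism phi satisfies the explicit formula for its own cochain:
   (x, p, sigma^p x) is the composite of g = (x, p - q, y) and (y, q, sigma^q y). *)
Lemma hom_formula phi : gpd_hom phi -> forall g p q,
  gdeg g = diffv p q -> spow s p (gr g) = spow s q (gs g) ->
  phi g = cochain_of phi p (gr g) - cochain_of phi q (gs g).
Proof.
move=> hom g p q D E; rewrite /cochain_of.
rewrite (hom g (arrow_of (gs g) q) (arrow_of (gr g) p)) ?addrK //=.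
by rewrite -/(gdeg g) D addz_diffv (addvC q) diffv_shift E.
Qed.

Lemma Phi_cochain_of phi : gpd_hom phi -> Phi (cochain_of phi) = phi.
Proof.
move=> hom; apply/funext => g; have [D E] := presentationP g.
by rewrite [RHS](hom_formula hom D E).
Qed.

Lemma Phi_on_generators c g i x : cocycle_eq s c ->
  sval g = (x, diffv (unitv i) zerov, s i x) -> Phi c g = c (unitv i) x.
Proof.
move=> cc Eg.
rewrite (Phi_formula cc (g:=g) (m:=unitv i) (n:=zerov)) /gdeg /gr /gs Eg //=.
  by rewrite (cocycle0 cc) subr0.
by rewrite spow_unitv spow0.
Qed.

Lemma hom_on_generators phi c : cocycle_eq s c -> gpd_hom phi ->
  (forall g i x, sval g = (x, diffv (unitv i) zerov, s i x) -> phi g = c (unitv i) x) ->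
  phi = Phi c.
Proof.
move=> cc hom gen; rewrite -(Phi_cochain_of hom).
have agree : forall p x, cochain_of phi p x = c p x.
  apply: cocycle_eq_on_generators (cochain_of_cocycle hom) cc _ => i x.
  by apply: gen; rewrite /= spow_unitv.
by congr Phi; apply/funext => p; apply/funext => x; exact: agree.
Qed.

End GroupoidCocycles.

Arguments Phi {X H k} s c g.

(* f is continuous and each point has an open neighbourhood N such that f maps
   the open subsets of N to open sets; local homeomorphisms are of this kind *)
Definition locally_open (T U : topologicalType) (f : T -> U) : Prop :=
  continuous f /\ forall x, exists N : set T,
    [/\ open N, N x & forall V, open V -> V `<=` N -> open (f @` V)].

Lemma locally_open_id (T : topologicalType) : locally_open (@id T).
Proof.
split=> [x|x]; first exact: cvg_id.
by exists setT; split=> //; [exact: openT | move=> V oV _; rewrite image_id].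
Qed.

Lemma locally_open_comp (T U V : topologicalType) (f : U -> V) (g : T -> U) :
  locally_open f -> locally_open g -> locally_open (f \o g).
Proof.
move=> [cf hf] [cg hg]; split=> [x|x]; first exact: continuous_comp (cg x) (cf (g x)).
have [Ng [oNg Ngx hNg]] := hg x; have [Nf [oNf Nfx hNf]] := hf (g x).
exists (Ng `&` g @^-1` Nf); split=> //.
- by apply: openI => //; exact: (continuousP g).1.
- move=> W oW WN; rewrite -image_comp; apply: hNf.
  + by apply: hNg => // y /WN[].
  + by move=> _ [y /WN[_ ?] <-].
Qed.

Lemma locally_open_iter (T : topologicalType) (f : T -> T) n :
  locally_open f -> locally_open (iter n f).
Proof.
move=> lf; elim: n => [|n IH]; first exact: locally_open_id.
by have := locally_open_comp lf IH; congr locally_open; apply/funext.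
Qed.

Lemma local_homeo_locally_open (T : topologicalType) (f : T -> T) :
  local_homeo f -> locally_open f.
Proof.
by move=> [cf hf]; split=> // x; have [U [oU Ux _ hU]] := hf x; exists U.
Qed.

Lemma image_restrict (T U : Type) (f : T -> U) (A : set T) (O : set U) :
  O `<=` f @` A -> f @` (A `&` f @^-1` O) = O.
Proof.
move=> OA; apply/seteqP; split; first by move=> _ [y [_ Oy] <-].
by move=> z Oz; have [y Ay fy] := OA z Oz; exists y => //; split=> //; rewrite /preimage /= fy.
Qed.

Lemma sub_open_nbhs (M : topologicalZmodType) (a b : M) (W : set M) :
  open W -> W (a - b)%R -> exists A B : set M,
    [/\ open A, A a, open B, B b & forall a' b', A a' -> B b' -> W (a' - b')%R].
Proof.
move=> oW Wab; have /(_ W (open_nbhs_nbhs (conj oW Wab))) := @sub_continuous M (a, b).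
move=> [[A0 B0] /= [nA nB] sub]; move: nA nB; rewrite !nbhsE.
move=> [A [oA Aa] AA0] [B [oB Bb] BB0]; exists A, B; split=> // a' b' Aa' Bb'.
by apply: (sub (a', b')); split; [exact: AA0 | exact: BB0].
Qed.

Section GroupoidTopology.
Variables (X : topologicalType) (k : nat) (s : 'I_k -> X -> X).
Hypothesis s_comm : forall i j, s i \o s j = s j \o s i.
Hypothesis s_lh : forall i, local_homeo (s i).

Lemma spow_locally_open p : locally_open (spow s p).
Proof.
rewrite /spow; elim: (enum 'I_k) => [|i l IH] /=; first exact: locally_open_id.
exact/locally_open_comp/IH/locally_open_iter/local_homeo_locally_open.
Qed.

Lemma basic_open_nbhs (U V : set X) p q x y :
  open U -> open V -> U x -> V y -> spow s p x = spow s q y ->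
  exists U' V' : set X, [/\ basic_open s (Zbasic s U' V' p q),
    U' `<=` U, V' `<=` V, U' x & V' y].
Proof.
move=> oU oV Ux Vy E.
have [cp hp] := spow_locally_open p; have [Np [oNp Npx hNp]] := hp x.
have [cq hq] := spow_locally_open q; have [Nq [oNq Nqy hNq]] := hq y.
set U1 := U `&` Np; set V1 := V `&` Nq.
set O := spow s p @` U1 `&` spow s q @` V1.
have oO : open O.
  by apply: openI; [apply: hNp | apply: hNq];
    [exact: openI | exact: subIsetr | exact: openI | exact: subIsetr].
exists (U1 `&` spow s p @^-1` O), (V1 `&` spow s q @^-1` O); split.
- exists (U1 `&` spow s p @^-1` O), (V1 `&` spow s q @^-1` O), p, q; split=> //.
  + by apply: openI; [exact: openI | exact: (continuousP _).1].
  + by apply: openI; [exact: openI | exact: (continuousP _).1].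
  + by rewrite !image_restrict // => z [].
- by move=> z [[]].
- by move=> z [[]].
- by split; [|split; [exists x|rewrite E; exists y]].
- by split; [|split; [rewrite -E; exists x|exists y]].
Qed.

Variable H : topologicalZmodType.
Local Open Scope ring_scope.

(* Near an arrow presented by (p, q), Phi(c) is (x', y') |-> c(p)(x') - c(q)(y'),
   which is continuous; basic_open_nbhs supplies the basic neighbourhood. *)
Lemma Phi_continuous (c : cochain X H k) : Z1 s c -> gpd_continuous (Phi s c).
Proof.
move=> [cc coc] g W oW Wg.
have [[p q] /= [D E]] := arrow_presentation g.
move: Wg; rewrite (Phi_formula coc D E) => Wg.
have [A [B [oA Aa oB Bb AB]]] := sub_open_nbhs oW Wg.
have [U' [V' [bZ U'A V'B U'x V'y]]] := basic_open_nbhs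
  ((continuousP _).1 (cc p) _ oA) ((continuousP _).1 (cc q) _ oB) Aa Bb E.
exists (Zbasic s U' V' p q); split=> // h [/U'A Ah /V'B Bh Dh Eh].
by rewrite (Phi_formula coc Dh Eh); exact: AB.
Qed.

(* x |-> phi(x, p, sigma^p x) is continuous: a basic neighbourhood
   Z(U, a, b, V) of (x, p, sigma^p x) has a - b = p, so it contains
   (y, p, sigma^p y) for all y in U near x with sigma^p y in V. *)
Lemma cochain_of_continuous (phi : Gpd s -> H) p :
  gpd_continuous phi -> continuous (cochain_of phi p).
Proof.
move=> phic; apply/continuousP => W oW; rewrite openE => x Wx.
have [_ [[U [V [a [b [oU oV _ ->]]]]] [/= Ux Vx D _] inW]] := phic (arrow_of s x p) W oW Wx.
have Ea : a = addv b p by rewrite addvC (diffv_cross D) addvC add0v.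
rewrite /interior nbhsE; exists (U `&` spow s p @^-1` V).
  split; last by split.
  by apply: openI => //; exact: (continuousP _).1 (spow_locally_open p).1 _ oV.
move=> y [Uy Vy]; apply: inW.
by rewrite /Zbasic /=; split=> //; rewrite Ea spow_add.
Qed.

(* Coboundaries correspond: alpha - n.alpha on N^k and f(r g) - f(s g) on G,
   with the same continuous function alpha = f. *)
Lemma Phi_coboundary (c : cochain X H k) : cocycle_eq s c -> (B1 s c <-> B1cont (Phi s c)).
Proof.
move=> coc; split=> [[alpha [ca E]] | [f [cf E]]].
- exists alpha; split=> // g; have [_ Eg] := presentationP g.
  by rewrite /Phi !E Eg opprB addrA subrK.
- by exists f; split=> // n x; rewrite -(Phi_arrow_of x n coc) E.
Qed.

End GroupoidTopology.

Theorem corollary3p9 (R : realType) (X : metricType R) (H : topologicalZmodType)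
  (k : nat) (s : 'I_k -> X -> X) :
  compact [set: X] ->
  locally_compact [set: H] -> hausdorff_space H ->
  (forall i j, s i \o s j = s j \o s i) ->
  (forall i y, exists x, s i x = y) ->
  (forall i, local_homeo (s i)) ->
  exists Phi : cochain X H k -> (Gpd s -> H),
    (* well-defined: Phi(c) is the unique continuous groupoid cocycle with the
       prescribed values on the generators, and is given by the explicit formula *)
    (forall c, Z1 s c ->
       [/\ Z1cont (Phi c), on_generators (Phi c) c, explicit_formula (Phi c) c &
           forall phi, Z1cont phi -> on_generators phi c -> phi = Phi c]) /\
    (* group homomorphism *)
    (forall c c', Z1 s c -> Z1 s c' ->
       Phi (addc c c') = (fun g => (Phi c g + Phi c' g)%R)) /\
    (* injective *)
    (forall c c', Z1 s c -> Z1 s c' -> Phi c = Phi c' -> c = c') /\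
    (* surjective *)
    (forall phi, Z1cont phi -> exists2 c, Z1 s c & Phi c = phi) /\
    (* restricts to an isomorphism B^1 ~= B^1_cont *)
    (forall c, Z1 s c -> (B1 s c <-> B1cont (Phi c))) /\
    (* induced map H^1 -> H^1_cont is well defined and injective on classes
       (surjectivity on classes follows from surjectivity above) *)
    (forall c c', Z1 s c -> Z1 s c' ->
       (B1 s (subc c c') <-> B1cont (fun g => (Phi c g - Phi c' g)%R))).
Proof.
move=> _ _ _ s_comm _ s_lh; exists (Phi s); split.
  move=> c Zc; have [_ coc] := Zc; split.
  - by split; [exact: Phi_hom | exact: Phi_continuous].
  - by move=> g i x; exact: Phi_on_generators.
  - by move=> g m n; exact: Phi_formula.
  - by move=> phi [hom _] gen; exact: hom_on_generators.
split; first by move=> c c' _ _; apply/funext => g; rewrite Phi_add.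
split.
  move=> c c' [_ coc] [_ coc'] E; apply/funext => p; apply/funext => x.
  by rewrite -(Phi_arrow_of x p coc) -(Phi_arrow_of x p coc') E.
split.
  move=> phi [hom cont]; exists (cochain_of phi); last exact: Phi_cochain_of.
  by split; [move=> p; exact: cochain_of_continuous | exact: cochain_of_cocycle].
split; first by move=> c [_ coc]; exact: Phi_coboundary.
move=> c c' [_ coc] [_ coc'].
have -> : (fun g => Phi s c g - Phi s c' g)%R = Phi s (subc c c').
  by apply/funext => g; rewrite Phi_sub.
exact/Phi_coboundary/subc_cocycle.
Qed.
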